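(* For every positive integer $p$, the number $m(2,p)$ of vertices of $H_\infty(2,p)$ satisfies $m(2,p)=8\sum_{j=1}^p\phi(j)$, where $\phi$ is the Euler totient function (with $\phi(1)=1$).
   Context: For $v\in\mathbb{Z}^2$, $\gcd(v)$ is the largest integer dividing both entries of $v$, and $v\succ0$ means the first nonzero coordinate of $v$ is positive. $H_\infty(2,p)=\sum[0,1]\{v\in\mathbb{Z}^2: \|v\|_\infty\leq p,\ \gcd(v)=1,\ v\succ0\}$, the Minkowski sum of the segments $[0,v]$ over these vectors $v$. $\phi(j)$ counts positive integers less than or equal to $j$ that are relatively prime to $j$. *)

From mathcomp Require Import all_boot all_order all_algebra.
Set Implicit Arguments. Unset Strict Implicit. Unset Printing Implicit Defensive.
Import Order.TTheory GRing.Theory Num.Theory.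
Local Open Scope ring_scope.

Definition zrange (p : nat) : seq int :=
  [seq (i%:Z - p%:Z) | i <- iota 0 (2 * p).+1].

Definition lexpos (v : int * int) : bool :=
  (0 < v.1) || ((v.1 == 0) && (0 < v.2)).

Definition gens (p : nat) : seq (int * int) :=
  [seq v <- [seq (a, b) | a <- zrange p, b <- zrange p]
     | (gcdz v.1 v.2 == 1) && lexpos v].

Definition inH (R : realFieldType) (p : nat) (x : R * R) : Prop :=
  exists t : nat -> R,
    (forall i, (i < size (gens p))%N -> 0 <= t i <= 1) /\
    x.1 = \sum_(i < size (gens p)) t i * ((nth (0,0) (gens p) i).1)%:~R /\
    x.2 = \sum_(i < size (gens p)) t i * ((nth (0,0) (gens p) i).2)%:~R.

Definition is_vertex (R : realFieldType) (p : nat) (x : R * R) : Prop :=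
  inH p x /\
  forall (y z : R * R) (lam : R), inH p y -> inH p z -> 0 < lam < 1 ->
    x.1 = lam * y.1 + (1 - lam) * z.1 ->
    x.2 = lam * y.2 + (1 - lam) * z.2 -> y = z.

From mathcomp Require Import all_boot all_order all_algebra zify ring lra.
Set Implicit Arguments. Unset Strict Implicit. Unset Printing Implicit Defensive.
Import Order.TTheory GRing.Theory Num.Theory.

(* Write H = {sum_i t_i g_i | t in [0,1]^n} over the generators g_i.  At a
   vertex every t_i is 0 or 1, since otherwise moving t_i both ways stays in H.
   Flipping the unselected generators to -g_i gives signed generators s_i with
   no positive dependency among three of them (it would produce a second,
   fractional representation of the vertex), so they lie in a half-plane and
   the vertex selects exactly the g_i in a half-open half-plane whose boundary
   ray is spanned by a primitive vector c of the box [-p, p]^2.  Conversely,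
   for each such c this selection is the unique maximiser of a generic
   perturbation of the functional <c, .>, hence a vertex, and c is recovered
   from it.  So vertices correspond to the 8 * sum_j phi(j) primitive vectors
   of the box. *)

Section IntegerVectors.
Local Open Scope ring_scope.
Implicit Types (c v w : int * int).

Definition dot c v : int := c.1 * v.1 + c.2 * v.2.
Definition cross v w : int := v.1 * w.2 - v.2 * w.1.
Definition rot v : int * int := (- v.2, v.1).
Definition negv v : int * int := (- v.1, - v.2).

Definition posv c v : bool :=
  (0 < dot c v) || ((dot c v == 0) && (0 < dot (rot c) v)).

Lemma crossvv v : cross v v = 0.
Proof. by rewrite /cross mulrC subrr. Qed.

Lemma crossC v w : cross w v = - cross v w.
Proof. by rewrite /cross; ring. Qed.

Lemma cross_negvl v w : cross (negv v) w = - cross v w.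
Proof. by rewrite /cross /negv /=; ring. Qed.

Lemma cross_negvr v w : cross v (negv w) = - cross v w.
Proof. by rewrite /cross /negv /=; ring. Qed.

Lemma dot_negvl v w : dot (negv v) w = - dot v w.
Proof. by rewrite /dot /negv /=; ring. Qed.

Lemma dot_negvr c v : dot c (negv v) = - dot c v.
Proof. by rewrite /dot /negv /=; ring. Qed.

Lemma negvK : involutive negv.
Proof. by case=> a b; rewrite /negv /= !opprK. Qed.

Lemma cross_cyclic_dep u v w :
  cross v w * u.1 + cross w u * v.1 + cross u v * w.1 = 0 /\
  cross v w * u.2 + cross w u * v.2 + cross u v * w.2 = 0.
Proof. by rewrite /cross; split; ring. Qed.

Lemma dot_self_gt0 v : v != (0, 0) -> 0 < dot v v.
Proof. by case: v => a b; rewrite /dot xpair_eqE negb_and /=; nia. Qed.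

Lemma dot_rot_neq0 c v : c != (0, 0) -> v != (0, 0) ->
  (dot c v != 0) || (dot (rot c) v != 0).
Proof.
move=> /dot_self_gt0 hc /dot_self_gt0 hv.
have lagrange : dot c v ^+ 2 + dot (rot c) v ^+ 2 = dot c c * dot v v.
  by rewrite /dot /rot /=; ring.
apply: contraTT (mulr_gt0 hc hv); rewrite negb_or !negbK => /andP[/eqP h1 /eqP h2].
by rewrite -lagrange h1 h2 expr0n addr0 ltxx.
Qed.

Lemma posv_negv c v : c != (0, 0) -> v != (0, 0) -> posv c (negv v) = ~~ posv c v.
Proof.
move=> hc hv; have := dot_rot_neq0 hc hv; rewrite /posv !dot_negvr.
by case: (ltgtP (dot c v) 0); case: (ltgtP (dot (rot c) v) 0) => //=; lia.
Qed.

Lemma posv_rot c : c != (0, 0) -> posv c (rot c).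
Proof.
move=> hc; have e1 : dot c (rot c) = 0 by rewrite /dot /rot /=; ring.
have e2 : dot (rot c) (rot c) = dot c c by rewrite /dot /rot /=; ring.
by rewrite /posv e1 e2 eqxx dot_self_gt0 ?orbT.
Qed.

Lemma posv_rotC c c' : posv c' (rot c) -> posv c (rot c') -> cross c c' = 0 /\ 0 < dot c c'.
Proof.
have e1 : dot c' (rot c) = cross c c' by rewrite /dot /cross /rot /=; ring.
have e2 : dot c (rot c') = - cross c c' by rewrite /dot /cross /rot /=; ring.
have e3 : dot (rot c) (rot c') = dot c c' by rewrite /dot /rot /=; ring.
rewrite /posv e1 e2 e3; case: (ltgtP (cross c c') 0) => //= h; lia.
Qed.

Lemma posv_negv_rot w v :
  posv (negv (rot w)) v = (0 < cross v w) || ((cross v w == 0) && (0 < dot w v)).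
Proof.
have e1 : dot (negv (rot w)) v = cross v w by rewrite /dot /cross /negv /rot /=; ring.
have e2 : dot (rot (negv (rot w))) v = dot w v by rewrite /dot /negv /rot /=; ring.
by rewrite /posv e1 e2.
Qed.

Lemma rot_negv_rot v : rot (negv (rot v)) = v.
Proof. by case: v => a b; rewrite /rot /negv /= !opprK. Qed.

Lemma lexpos_negv v : v != (0, 0) -> lexpos (negv v) = ~~ lexpos v.
Proof.
case: v => a b; rewrite /lexpos /negv xpair_eqE negb_and /= !oppr_gt0 oppr_eq0.
by case: (ltgtP a 0); case: (ltgtP b 0).
Qed.

Lemma lexpos_parallel_dot_gt0 v w : lexpos v -> lexpos w -> cross v w = 0 -> 0 < dot v w.
Proof. by case: v w => [a1 a2] [b1 b2]; rewrite /lexpos /cross /dot /=; nia. Qed.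

Lemma dvdz_anti (a b : int) : (a %| b)%Z -> (b %| a)%Z -> `|a|%N = `|b|%N.
Proof. by rewrite /dvdz => h1 h2; rewrite -(gcdn_idPl h1) (gcdn_idPr h2). Qed.

Lemma coprimez_cross_dvd (a1 a2 b1 b2 : int) :
  coprimez a1 a2 -> a1 * b2 = a2 * b1 -> (a1 %| b1)%Z.
Proof. by move=> ca hab; rewrite -(Gauss_dvdzr _ ca) -hab dvdz_mulr. Qed.

Lemma coprime_parallel_eq v w : gcdz v.1 v.2 = 1 -> gcdz w.1 w.2 = 1 ->
  cross v w = 0 -> 0 < dot v w -> v = w.
Proof.
case: v w => [a1 a2] [b1 b2]; rewrite /cross /dot /= => ha hb hc hd.
have ca : coprimez a1 a2 by rewrite /coprimez ha.
have ca' : coprimez a2 a1 by rewrite /coprimez gcdzC ha.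
have cb : coprimez b1 b2 by rewrite /coprimez hb.
have cb' : coprimez b2 b1 by rewrite /coprimez gcdzC hb.
have e1 : `|a1|%N = `|b1|%N.
  by apply: dvdz_anti;
    [apply: (coprimez_cross_dvd (b2 := b2) ca) | apply: (coprimez_cross_dvd (b2 := a2) cb)]; lia.
have e2 : `|a2|%N = `|b2|%N.
  by apply: dvdz_anti;
    [apply: (coprimez_cross_dvd (b2 := b1) ca') | apply: (coprimez_cross_dvd (b2 := a1) cb')]; lia.
by have [-> ->] : a1 = b1 /\ a2 = b2 by clear -e1 e2 hc hd; nia.
Qed.

Definition box_prim (p : nat) v : bool :=
  [&& gcdz v.1 v.2 == 1, `|v.1| <= p%:Z & `|v.2| <= p%:Z].

Lemma box_prim_neq0 p v : box_prim p v -> v != (0, 0).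
Proof.
case: v => a b /and3P[h _ _]; apply: contraTneq h => -[-> ->].
by rewrite gcd0z.
Qed.

Lemma box_prim_negv p v : box_prim p (negv v) = box_prim p v.
Proof. by rewrite /box_prim /negv /= gcdNz gcdzN !normrN. Qed.

Lemma box_prim_rot p v : box_prim p (rot v) = box_prim p v.
Proof. by rewrite /box_prim /rot /= gcdNz gcdzC normrN; congr andb; apply: andbC. Qed.

(* On the box, [|dot (rot c) v| <= 2 p^2], so the sign of
   [dot (perturb p c) v] is the lexicographic sign of the pair
   [(dot c v, dot (rot c) v)]. *)
Definition perturb (p : nat) c : int * int :=
  ((2 * p * p + 1)%:Z * c.1 + (rot c).1, (2 * p * p + 1)%:Z * c.2 + (rot c).2).

Lemma dot_perturb p c v :
  dot (perturb p c) v = (2 * p * p + 1)%:Z * dot c v + dot (rot c) v.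
Proof. by rewrite /dot /perturb /=; ring. Qed.

Lemma rot_dot_lt p c v : box_prim p c -> box_prim p v ->
  `|dot (rot c) v| < (2 * p * p + 1)%:Z.
Proof.
case: c v => [c1 c2] [v1 v2]; rewrite /box_prim /dot /rot /=.
by move=> /and3P[_ h1 h2] /and3P[_ h3 h4]; nia.
Qed.

Lemma posv_perturb p c v : box_prim p c -> box_prim p v ->
  posv c v = (0 < dot (perturb p c) v).
Proof.
move=> hc hv; have := rot_dot_lt hc hv; rewrite dot_perturb /posv.
by move: (dot c v) (dot (rot c) v) => d e he; apply/idP/idP; nia.
Qed.

Lemma dot_perturb_neq0 p c v : box_prim p c -> box_prim p v -> dot (perturb p c) v != 0.
Proof.
move=> hc hv; have := rot_dot_lt hc hv.
have := dot_rot_neq0 (box_prim_neq0 hc) (box_prim_neq0 hv); rewrite dot_perturb.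
move: (dot c v) (dot (rot c) v) => d e hde he.
have [d0|hd] := eqVneq d 0; first by move: hde; rewrite d0 eqxx mulr0 add0r.
by case: (ltgtP d 0) hd => // hd _; nia.
Qed.

End IntegerVectors.

Lemma exists_greatest (T : eqType) (r : rel T) (s : seq T) : s != [::] ->
  (forall x y, x \in s -> y \in s -> x != y -> r x y || r y x) ->
  (forall x y z, x \in s -> y \in s -> z \in s -> r x y -> r y z -> r x z) ->
  exists2 k, k \in s & forall x, x \in s -> x != k -> r x k.
Proof.
elim: s => [//|a [|a' s'] IH] _ tot tr.
  by exists a => [|x]; rewrite ?mem_seq1 // => ->.
have sub : {subset a' :: s' <= a :: a' :: s'} by move=> x hx; rewrite inE hx orbT.
have [k hk kmax] := IH isT (fun x y hx hy => tot x y (sub x hx) (sub y hy))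
  (fun x y z hx hy hz => tr x y z (sub x hx) (sub y hy) (sub z hz)).
have [->|ak] := eqVneq a k.
  exists k => [|x]; first exact: mem_head.
  by rewrite inE => /predU1P[->|/kmax]; rewrite ?eqxx.
have /orP[rak|rka] := tot a k (mem_head _ _) (sub _ hk) ak.
  exists k => [|x]; first exact: sub _ hk.
  by rewrite inE => /predU1P[->|/kmax] //.
exists a => [|x]; first exact: mem_head.
rewrite inE => /predU1P[->|hx]; first by rewrite eqxx.
have [->|xk] := eqVneq x k; first by [].
by move=> _; apply: tr (sub _ hx) (sub _ hk) (mem_head _ _) (kmax x hx xk) rka.
Qed.

Section Zonotope.
Local Open Scope ring_scope.
Variables (R : realFieldType) (gs : seq (int * int)).
Local Notation n := (size gs).
Local Notation gen i := (nth (0, 0) gs i).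

Definition zsum (t : nat -> R) : R * R :=
  (\sum_(i < n) t i * (gen i).1%:~R, \sum_(i < n) t i * (gen i).2%:~R).

Definition in_unit_box (t : nat -> R) := forall i, (i < n)%N -> 0 <= t i <= 1.

Definition in_zonotope (x : R * R) := exists2 t, in_unit_box t & x = zsum t.

Definition extreme (x : R * R) :=
  in_zonotope x /\
  forall (y z : R * R) (lam : R), in_zonotope y -> in_zonotope z -> 0 < lam < 1 ->
    x.1 = lam * y.1 + (1 - lam) * z.1 -> x.2 = lam * y.2 + (1 - lam) * z.2 -> y = z.

Lemma eq_zsum t t' : (forall i, (i < n)%N -> t i = t' i) -> zsum t = zsum t'.
Proof. by move=> e; congr pair; apply: eq_bigr => i _; rewrite e. Qed.

Lemma zsumD t a :
  zsum (fun i => t i + a i) = ((zsum t).1 + (zsum a).1, (zsum t).2 + (zsum a).2).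
Proof.
by rewrite /zsum /=; congr pair; rewrite -big_split; apply: eq_bigr => i _; rewrite mulrDl.
Qed.
Lemma zsumN a : zsum (fun i => - a i) = (- (zsum a).1, - (zsum a).2).
Proof. by rewrite /zsum /=; congr pair; rewrite -sumrN; apply: eq_bigr => i _; rewrite mulNr. Qed.

Lemma zsumD0 t a : zsum a = (0, 0) -> zsum (fun i => t i + a i) = zsum t.
Proof. by move=> za; rewrite zsumD za !addr0 -surjective_pairing. Qed.

Lemma sum_delta (F : nat -> R) i : (i < n)%N -> \sum_(j < n) (j == i :> nat)%:R * F j = F i.
Proof.
move=> hi; rewrite (bigD1 (Ordinal hi)) //= eqxx mul1r big1 ?addr0 // => j hj.
rewrite (_ : (j == i :> nat) = false) ?mul0r //.
by apply: contraNF hj => /eqP hji; apply/eqP/val_inj.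
Qed.

Lemma sum_delta3 i j k (a b c : R) (F : nat -> R) : (i < n)%N -> (j < n)%N -> (k < n)%N ->
  \sum_(l < n) ((l == i :> nat)%:R * a + (l == j :> nat)%:R * b + (l == k :> nat)%:R * c) * F l
  = a * F i + b * F j + c * F k.
Proof.
move=> hi hj hk; rewrite -(sum_delta (fun l => a * F l) hi) -(sum_delta (fun l => b * F l) hj).
by rewrite -(sum_delta (fun l => c * F l) hk) -!big_split; apply: eq_bigr => l _ /=; ring.
Qed.

Lemma zsum_delta a i : (i < n)%N ->
  zsum (fun j => a * (j == i)%:R) = (a * (gen i).1%:~R, a * (gen i).2%:~R).
Proof.
move=> hi; rewrite /zsum; congr pair.
  by rewrite -(sum_delta (fun j => a * (gen j).1%:~R) hi); apply: eq_bigr => j _; ring.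
by rewrite -(sum_delta (fun j => a * (gen j).2%:~R) hi); apply: eq_bigr => j _; ring.
Qed.

Definition lin (f : int * int) (x : R * R) : R := f.1%:~R * x.1 + f.2%:~R * x.2.

Lemma lin_zsum f t : lin f (zsum t) = \sum_(i < n) t i * (dot f (gen i))%:~R.
Proof.
rewrite /lin /zsum /= !mulr_sumr -big_split; apply: eq_bigr => i _.
by rewrite /dot rmorphD /= !rmorphM /=; ring.
Qed.

Definition argmax_coef (f : int * int) (i : nat) : R := (0 < dot f (gen i))%R%:R.

Lemma argmax_gap_ge0 f (s : R) i :
  0 <= s <= 1 -> 0 <= (argmax_coef f i - s) * (dot f (gen i))%:~R.
Proof.
move=> /andP[s0 s1]; rewrite /argmax_coef; case: ltrP => hd /=.
  by rewrite mulr_ge0 ?subr_ge0 // ler0z ltW.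
by rewrite sub0r mulr_le0 ?oppr_le0 // lerz0.
Qed.

Lemma lin_argmax_gap f t : lin f (zsum (argmax_coef f)) - lin f (zsum t) =
  \sum_(i < n) (argmax_coef f i - t i) * (dot f (gen i))%:~R.
Proof. by rewrite !lin_zsum -sumrB; apply: eq_bigr => i _; rewrite mulrBl. Qed.

Lemma lin_zsum_le f t : in_unit_box t -> lin f (zsum t) <= lin f (zsum (argmax_coef f)).
Proof.
move=> ht; rewrite -subr_ge0 lin_argmax_gap sumr_ge0 // => i _.
exact/argmax_gap_ge0/ht.
Qed.

Lemma lin_zsum_max_eq f t : (forall i, (i < n)%N -> dot f (gen i) != 0) -> in_unit_box t ->
  lin f (zsum t) = lin f (zsum (argmax_coef f)) -> forall i, (i < n)%N -> t i = argmax_coef f i.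
Proof.
move=> hf ht heq i hi.
have /eqP := lin_argmax_gap f t; rewrite heq subrr eq_sym.
rewrite psumr_eq0 => [/allP/(_ (Ordinal hi))|j _]; last exact/argmax_gap_ge0/ht.
rewrite mem_index_enum => /(_ isT) /=.
by rewrite mulf_eq0 intr_eq0 (negbTE (hf i hi)) orbF subr_eq0 => /eqP.
Qed.

Lemma extreme_argmax f : (forall i, (i < n)%N -> dot f (gen i) != 0) ->
  extreme (zsum (argmax_coef f)).
Proof.
move=> hf; split.
  by exists (argmax_coef f) => // i _; rewrite /argmax_coef; case: (_ < _); rewrite /= ?lexx ?ler01.
move=> y z lam [ty hty ->] [tz htz ->] /andP[l0 l1] e1 e2.
have hy := lin_zsum_le f hty; have hz := lin_zsum_le f htz.
have hmid : lin f (zsum (argmax_coef f)) =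
    lam * lin f (zsum ty) + (1 - lam) * lin f (zsum tz) by rewrite /lin e1 e2; ring.
have ey : lin f (zsum ty) = lin f (zsum (argmax_coef f)) by nra.
have ez : lin f (zsum tz) = lin f (zsum (argmax_coef f)) by nra.
by rewrite (eq_zsum (lin_zsum_max_eq hf hty ey)) (eq_zsum (lin_zsum_max_eq hf htz ez)).
Qed.

Lemma extreme_rigid t a : extreme (zsum t) ->
  in_unit_box (fun i => t i + a i) -> in_unit_box (fun i => t i - a i) -> zsum a = (0, 0).
Proof.
move=> [_ hx] hp hm.
have half : 0 < (2^-1 : R) < 1.
  by apply/andP; split; [rewrite invr_gt0 ltr0n | rewrite invf_lt1 ?ltr0n ?ltr1n].
have := hx _ _ _ (ex_intro2 _ _ _ hp erefl) (ex_intro2 _ _ _ hm erefl) half.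
rewrite zsumD (zsumD t (fun i => - a i)) zsumN.
case: (zsum t) => T1 T2; case: (zsum a) => A1 A2 /=.
have mid (u v : R) : u = 2^-1 * (u + v) + (1 - 2^-1) * (u + - v) by field.
by move=> /(_ (mid _ _) (mid _ _)) [h1 h2]; congr pair; lra.
Qed.

Hypothesis gs_neq0 : forall i, (i < n)%N -> gen i != (0, 0).

Lemma extreme_coef01 t : extreme (zsum t) -> in_unit_box t ->
  forall i, (i < n)%N -> t i = 0 \/ t i = 1.
Proof.
move=> hx ht i hi; have /andP[t0 t1] := ht i hi.
have [->|ti0] := eqVneq (t i) 0; first by left.
have [->|ti1] := eqVneq (t i) 1; first by right.
have {t0 ti0} t0 : 0 < t i by rewrite lt_neqAle eq_sym ti0.
have {t1 ti1} t1 : t i < 1 by rewrite lt_neqAle ti1.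
pose e := t i * (1 - t i).
have box_delta (s : R) : -e <= s <= e -> in_unit_box (fun j => t j + s * (j == i)%:R).
  move=> /andP[s0 s1] j hj; have [->|ji] := eqVneq j i.
    by rewrite /= mulr1n mulr1; rewrite /e in s0 s1; apply/andP; split; nra.
  by rewrite /= mulr0n mulr0 addr0; exact: ht.
have e0 : 0 < e by rewrite /e mulr_gt0 ?subr_gt0.
have hp : in_unit_box (fun j => t j + e * (j == i)%:R).
  by apply: box_delta; apply/andP; split; lra.
have hm : in_unit_box (fun j => t j - e * (j == i)%:R).
  have hm : in_unit_box (fun j => t j + - e * (j == i)%:R).
    by apply: box_delta; apply/andP; split; lra.
  by move=> j /hm; rewrite mulNr.
move: (extreme_rigid hx hp hm); rewrite zsum_delta // => -[].
move=> /eqP; rewrite mulf_eq0 gt_eqF //= intr_eq0 => /eqP g1.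
move=> /eqP; rewrite mulf_eq0 gt_eqF //= intr_eq0 => /eqP g2.
by move: (gs_neq0 hi); case: (gen i) g1 g2 => a b /= -> ->; rewrite eqxx.
Qed.

Definition subsum (b : nat -> bool) := zsum (fun i => (b i)%:R).

Definition sgen (b : nat -> bool) i := if b i then gen i else negv (gen i).

(* Moving each 0/1 coefficient by [w i] towards the interior of [0, 1] changes
   the point by [- sum_i w i sgen b i = 0], and gives fractional coefficients. *)
Lemma extreme_signed_dependency b (w : nat -> R) : extreme (subsum b) ->
  (forall i, (i < n)%N -> 0 <= w i < 1) ->
  \sum_(i < n) w i * (sgen b i).1%:~R = 0 -> \sum_(i < n) w i * (sgen b i).2%:~R = 0 ->
  forall i, (i < n)%N -> w i = 0.
Proof.
move=> hx hw s1 s2 i hi.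
pose a j : R := if b j then - w j else w j.
have za : zsum a = (0, 0).
  have flip (pr : int * int -> int) : (forall v, pr (negv v) = - pr v) ->
      \sum_(j < n) a j * (pr (gen j))%:~R = - \sum_(j < n) w j * (pr (sgen b j))%:~R.
    move=> prN; rewrite -sumrN; apply: eq_bigr => j _.
    by rewrite /a /sgen; case: (b j); rewrite ?prN ?rmorphN ?mulNr ?mulrN ?opprK.
  by rewrite /zsum (flip fst) // (flip snd) // s1 s2 oppr0.
have ht : in_unit_box (fun j => (b j)%:R + a j).
  move=> j hj; have /andP[w0 w1] := hw j hj.
  by rewrite /a; case: (b j); rewrite /= ?mulr1n ?mulr0n; apply/andP; split; lra.
have hx' : extreme (zsum (fun j => (b j)%:R + a j)) by rewrite zsumD0.
have /andP[w0 w1] := hw i hi.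
by case: (extreme_coef01 hx' ht hi); rewrite /a; case: (b i); rewrite /= ?mulr1n ?mulr0n; lra.
Qed.

Lemma extreme_no_positive_triple b i j k : extreme (subsum b) ->
  (i < n)%N -> (j < n)%N -> (k < n)%N ->
  0 < cross (sgen b i) (sgen b j) -> 0 < cross (sgen b j) (sgen b k) ->
  0 < cross (sgen b k) (sgen b i) -> False.
Proof.
move=> hx hi hj hk cij cjk cki.
have nij : i != j by apply: contraTneq cij => ->; rewrite crossvv ltxx.
have njk : j != k by apply: contraTneq cjk => ->; rewrite crossvv ltxx.
have nik : i != k by apply: contraTneq cki => ->; rewrite crossvv ltxx.
have [dep1 dep2] := cross_cyclic_dep (sgen b i) (sgen b j) (sgen b k).
set mi := cross (sgen b j) (sgen b k) in cjk dep1 dep2.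
set mj := cross (sgen b k) (sgen b i) in cki dep1 dep2.
set mk := cross (sgen b i) (sgen b j) in cij dep1 dep2.
have M0 : 0 < mi + mj + mk by lia.
pose wt (x : int) : R := x%:~R / (mi + mj + mk)%:~R.
have wt_bound x : 0 < x -> x < mi + mj + mk -> 0 <= wt x < 1.
  move=> x0 xM; have M0' : (0 : R) < (mi + mj + mk)%:~R by rewrite ltr0z.
  apply/andP; split; last by rewrite ltr_pdivrMr // mul1r ltr_int.
  by apply: divr_ge0; [rewrite ler0z ltW | exact: ltW].
have wt_dep (x y z : int) : mi * x + mj * y + mk * z = 0 ->
    wt mi * x%:~R + wt mj * y%:~R + wt mk * z%:~R = 0.
  move=> e; have e' : (mi%:~R * x%:~R + mj%:~R * y%:~R + mk%:~R * z%:~R : R) = 0.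
    by rewrite -!intrM -!intrD e.
  transitivity ((mi%:~R * x%:~R + mj%:~R * y%:~R + mk%:~R * z%:~R) / (mi + mj + mk)%:~R : R).
    by rewrite /wt; ring.
  by rewrite e' mul0r.
pose w l : R := (l == i)%:R * wt mi + (l == j)%:R * wt mj + (l == k)%:R * wt mk.
have hw l : (l < n)%N -> 0 <= w l < 1.
  move=> _; rewrite /w; have [->|li] := eqVneq l i.
    by rewrite (negbTE nij) (negbTE nik) /= mulr1n !mulr0n mul1r !mul0r !addr0 wt_bound //; lia.
  have [->|lj] := eqVneq l j.
    by rewrite (negbTE njk) /= mulr1n !mulr0n mul1r !mul0r add0r addr0 wt_bound //; lia.
  have [_|lk] := eqVneq l k.
    by rewrite /= mulr1n !mulr0n mul1r !mul0r !add0r wt_bound //; lia.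
  by rewrite /= !mulr0n !mul0r !addr0 lexx ltr01.
have s1 : \sum_(l < n) w l * (sgen b l).1%:~R = 0.
  by rewrite /w (sum_delta3 _ _ _ (fun l => (sgen b l).1%:~R)) // wt_dep.
have s2 : \sum_(l < n) w l * (sgen b l).2%:~R = 0.
  by rewrite /w (sum_delta3 _ _ _ (fun l => (sgen b l).2%:~R)) // wt_dep.
move/eqP: (extreme_signed_dependency hx hw s1 s2 hi).
rewrite /w /wt eqxx (negbTE nij) (negbTE nik) /= mulr1n !mulr0n mul1r !mul0r !addr0.
by rewrite mulf_eq0 invr_eq0 !intr_eq0 (gt_eqF cjk) (gt_eqF M0).
Qed.

Hypothesis gs_nonparallel :
  forall i j, (i < n)%N -> (j < n)%N -> i != j -> cross (gen i) (gen j) != 0.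

Lemma cross_sgen_neq0 b i j :
  (i < n)%N -> (j < n)%N -> i != j -> cross (sgen b i) (sgen b j) != 0.
Proof.
move=> hi hj ij; have := gs_nonparallel hi hj ij.
by rewrite /sgen; case: (b i); case: (b j); rewrite ?cross_negvl ?cross_negvr ?opprK ?oppr_eq0.
Qed.

Lemma extreme_subsum_half_plane b : (0 < n)%N -> extreme (subsum b) ->
  exists2 k, (k < n)%N & forall i, (i < n)%N -> b i = posv (negv (rot (sgen b k))) (gen i).
Proof.
move=> n0 hx; pose r i j := 0 < cross (sgen b i) (sgen b j).
have tot i j : (i < n)%N -> (j < n)%N -> i != j -> r i j || r j i.
  move=> hi hj ij; have := cross_sgen_neq0 b hi hj ij.
  by rewrite /r (crossC (sgen b i)) oppr_gt0; case: ltgtP.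
(* [r] is a strict total order, transitive by [extreme_no_positive_triple];
   its greatest element bounds the half-plane. *)
have [k] : exists2 k, k \in iota 0 n & forall i, i \in iota 0 n -> i != k -> r i k.
  apply: exists_greatest => [|i j|i j l]; rewrite ?mem_iota //=.
  - by rewrite -size_eq0 size_iota -lt0n.
  - exact: tot.
  move=> hi hj hl rij rjl; have [eil|nil] := eqVneq i l.
    by move: rjl; rewrite /r -eil crossC oppr_gt0 ltNge (ltW rij).
  case/orP: (tot i l hi hl nil) => // rli.
  by case: (extreme_no_positive_triple hx hi hj hl rij rjl rli).
rewrite mem_iota /= => hk kmax; exists k => // i hi.
set K := sgen b k; rewrite posv_negv_rot.
have [->|ik] := eqVneq i k.
  have g0 := dot_self_gt0 (gs_neq0 hk).
  rewrite /K /sgen; case: (b k); rewrite ?cross_negvr crossvv ?oppr0 ltxx eqxx //=.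
  by rewrite dot_negvl oppr_gt0 ltNge (ltW g0).
have : r i k by apply: kmax ik; rewrite mem_iota.
rewrite /r -/K /sgen; case: (b i) => [->//|]; rewrite cross_negvl oppr_gt0 => neg.
by rewrite ltNge (ltW neg) (lt_eqF neg).
Qed.

Definition half_plane_vertex (c : int * int) := subsum (fun i => posv c (gen i)).

Lemma extreme_eq_half_plane_vertex x : (0 < n)%N -> extreme x ->
  exists2 c, rot c \in gs ++ map negv gs & x = half_plane_vertex c.
Proof.
move=> n0 hx; have [[t ht ex] _] := hx; rewrite ex in hx *.
have t01 := extreme_coef01 hx ht.
have tb : zsum t = subsum (fun i => t i == 1).
  by apply: eq_zsum => i hi; case: (t01 i hi) => ->; rewrite ?eqxx ?(eq_sym 0) ?oner_eq0.
rewrite tb in hx *.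
have [k hk hb] := extreme_subsum_half_plane n0 hx.
exists (negv (rot (sgen (fun i => t i == 1) k))); last by apply: eq_zsum => i /hb <-.
rewrite rot_negv_rot mem_cat /sgen; case: (_ == 1); first by rewrite mem_nth.
by rewrite map_f ?orbT ?mem_nth.
Qed.

End Zonotope.

Section Box.
Local Open Scope ring_scope.
Variable p : nat.

Lemma mem_zrange x : (x \in zrange p) = (`|x| <= p%:Z).
Proof.
apply/mapP/idP => [[i]|hx]; first by rewrite mem_iota add0n => /andP[_ hi] ->; lia.
by exists (absz (x + p%:Z)); rewrite ?mem_iota; lia.
Qed.

Lemma uniq_zrange : uniq (zrange p).
Proof. by rewrite map_inj_uniq ?iota_uniq // => a b /addIr [->]. Qed.

Lemma mem_gens v : (v \in gens p) = box_prim p v && lexpos v.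
Proof.
rewrite mem_filter /box_prim.
have -> : (v \in [seq (a, b) | a <- zrange p, b <- zrange p]) =
    (`|v.1| <= p%:Z) && (`|v.2| <= p%:Z).
  case: v => a b; apply/allpairsP/andP => [[[a' b'] /= [ha hb [-> ->]]]|[ha hb]].
    by rewrite -!mem_zrange.
  by exists (a, b); rewrite !mem_zrange.
by case: (gcdz _ _ == 1); case: (lexpos v); rewrite /= ?andbT ?andbF.
Qed.

Lemma uniq_gens : uniq (gens p).
Proof. by rewrite filter_uniq // allpairs_uniq ?uniq_zrange // => -[? ?] [? ?]. Qed.

Definition prims := gens p ++ map negv (gens p).

Lemma mem_prims v : (v \in prims) = box_prim p v.
Proof.
rewrite mem_cat -{2}[v]negvK (mem_map (can_inj negvK)) !mem_gens box_prim_negv.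
have [/box_prim_neq0/lexpos_negv ->|] := boolP (box_prim p v); last by [].
by rewrite /= orbN.
Qed.

Lemma uniq_prims : uniq prims.
Proof.
rewrite cat_uniq uniq_gens (map_inj_uniq (can_inj negvK)) uniq_gens andbT /=.
apply/hasPn => _ /mapP[v hv ->]; move: hv; rewrite !mem_gens => /andP[hv lv].
by rewrite box_prim_negv hv lexpos_negv ?lv // (box_prim_neq0 hv).
Qed.

Lemma gens_parallel_eq v w : v \in gens p -> w \in gens p -> cross v w = 0 -> v = w.
Proof.
rewrite !mem_gens => /andP[/and3P[gv _ _] lv] /andP[/and3P[gw _ _] lw] hc.
exact: coprime_parallel_eq (eqP gv) (eqP gw) hc (lexpos_parallel_dot_gt0 lv lw hc).
Qed.

Lemma gens_nonparallel i j : (i < size (gens p))%N -> (j < size (gens p))%N -> i != j ->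
  cross (nth (0, 0) (gens p) i) (nth (0, 0) (gens p) j) != 0.
Proof.
move=> hi hj; apply: contraNneq => /(gens_parallel_eq (mem_nth _ hi) (mem_nth _ hj)).
by move/eqP; rewrite nth_uniq ?uniq_gens.
Qed.

Lemma gens_box_prim i : (i < size (gens p))%N -> box_prim p (nth (0, 0) (gens p) i).
Proof. by move/(mem_nth (0, 0)); rewrite mem_gens => /andP[]. Qed.

Lemma gens_neq0 i : (i < size (gens p))%N -> nth (0, 0) (gens p) i != (0, 0).
Proof. by move/gens_box_prim/box_prim_neq0. Qed.

Lemma size_gens_gt0 : (0 < p)%N -> (0 < size (gens p))%N.
Proof.
move=> p0; have : ((1, 0) : int * int) \in gens p by rewrite mem_gens /box_prim /lexpos /=; lia.
by case: (gens p).
Qed.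

End Box.

Section Vertices.
Local Open Scope ring_scope.
Variables (R : realFieldType) (p : nat).
Local Notation gen i := (nth (0, 0) (gens p) i).
Local Notation V := (half_plane_vertex R (gens p)).

Lemma inHE (x : R * R) : inH p x <-> in_zonotope (gens p) x.
Proof.
split=> [[t [ht [e1 e2]]]|[t ht ->]]; last by exists t.
by exists t => //; case: x e1 e2 => a b /= -> ->.
Qed.

Lemma is_vertexE (x : R * R) : is_vertex p x <-> extreme (gens p) x.
Proof.
split=> -[/inHE hx hv]; split=> // y z lam /inHE hy /inHE hz; exact: hv.
Qed.

Lemma half_plane_vertex_argmax c :
  box_prim p c -> V c = zsum (gens p) (argmax_coef R (gens p) (perturb p c)).
Proof.
by move=> hc; apply: eq_zsum => i hi; rewrite /argmax_coef -posv_perturb ?gens_box_prim.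
Qed.

Lemma half_plane_vertex_extreme c : c \in prims p -> extreme (gens p) (V c).
Proof.
rewrite mem_prims => hc; rewrite half_plane_vertex_argmax //.
by apply: extreme_argmax => i hi; rewrite dot_perturb_neq0 ?gens_box_prim.
Qed.

Lemma half_plane_vertex_inj : {in prims p &, injective V}.
Proof.
move=> c c'; rewrite !mem_prims => hc hc' eqV.
have c0 := box_prim_neq0 hc; have c0' := box_prim_neq0 hc'.
have same_gens i : (i < size (gens p))%N -> posv c (gen i) = posv c' (gen i).
  move=> hi; have hbox : in_unit_box (gens p) (fun i => (posv c' (gen i))%:R : R).
    by move=> j _; case: posv; rewrite /= ?mulr1n ?mulr0n ?lexx ?ler01.
  have := lin_zsum_max_eq (f := perturb p c) _ hbox.
  rewrite -half_plane_vertex_argmax // (_ : zsum _ _ = V c') // -eqV.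
  move=> /(_ (fun j hj => dot_perturb_neq0 hc (gens_box_prim hj)) erefl i hi).
  rewrite /argmax_coef -posv_perturb ?gens_box_prim //.
  by case: posv; case: posv => // /eqP; rewrite ?oner_eq0 // eq_sym oner_eq0.
(* Equal selections make [posv c] and [posv c'] agree on all of [prims p];
   evaluating at [rot c] and [rot c'] forces [c = c']. *)
have same v : v \in prims p -> posv c v = posv c' v.
  rewrite /prims mem_cat => /orP[|/mapP[w]] /(nthP (0, 0))[i hi <-]; first exact: same_gens.
  have g0 := box_prim_neq0 (gens_box_prim hi).
  by move=> ->; rewrite !posv_negv ?same_gens.
have [hcross hdot] : cross c c' = 0 /\ 0 < dot c c'.
  apply: posv_rotC.
    by rewrite -same ?mem_prims ?box_prim_rot // posv_rot.
  by rewrite same ?mem_prims ?box_prim_rot // posv_rot.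
move: hc hc' => /and3P[gc _ _] /and3P[gc' _ _].
exact: coprime_parallel_eq (eqP gc) (eqP gc') hcross hdot.
Qed.

End Vertices.

Section Counting.
Local Open Scope ring_scope.

Lemma zrangeS p : zrange p.+1 = - p.+1%:Z :: rcons (zrange p) p.+1%:Z.
Proof.
rewrite /zrange (_ : (2 * p.+1).+1 = 1 + (2 * p).+1 + 1)%N; last by lia.
rewrite !iotaD (iotaDl 1 0) !map_cat -map_comp -cats1 -cat1s catA.
congr ((_ ++ _) ++ _); [congr [:: _] | apply: eq_map => i /= | congr [:: _]]; lia.
Qed.

Lemma big_zrange (F : int -> nat) p :
  \sum_(x <- zrange p) F x = (F 0 + \sum_(1 <= j < p.+1) (F j%:Z + F (- j%:Z)))%N.
Proof.
elim: p => [|p IH]; first by rewrite big_geq // addn0 /zrange /= big_seq1 subr0.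
by rewrite zrangeS big_cons -cats1 big_cat big_seq1 /= IH [in RHS]big_nat_recr //=; lia.
Qed.

Lemma sum_coprime_totient n : (0 < n)%N -> (\sum_(1 <= j < n.+1) coprime n j)%N = totient n.
Proof.
move=> n0; rewrite totient_count_coprime big_nat_recr //= [RHS]big_ltn // addnC.
by rewrite /coprime gcdnn gcdn0.
Qed.

Lemma sum_coprime_pairs p :
  (\sum_(1 <= i < p.+1) \sum_(1 <= j < p.+1) coprime i j + (0 < p))%N =
  (2 * \sum_(1 <= j < p.+1) totient j)%N.
Proof.
elim: p => [|p IH]; first by rewrite !big_geq.
rewrite big_nat_recr //= (sum_coprime_totient (ltn0Sn p)) [in RHS]big_nat_recr //= mulnDr -IH.
rewrite (eq_bigr (fun i => \sum_(1 <= j < p.+1) coprime i j + coprime p.+1 i)%N); last first.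
  by move=> i _; rewrite big_nat_recr //= coprime_sym.
have col : (\sum_(1 <= i < p.+1) coprime p.+1 i + (p == 0))%N = totient p.+1.
  by rewrite -(sum_coprime_totient (ltn0Sn p)) [in RHS]big_nat_recr //= /coprime gcdnn.
have : ((0 < p) + (p == 0) = 1)%N by case: p {IH col}.
by rewrite big_split /=; lia.
Qed.

Definition gen_ind (a b : int) : nat := (gcdz a b == 1) && lexpos (a, b).

Lemma size_gens_sum p :
  size (gens p) = (\sum_(a <- zrange p) \sum_(b <- zrange p) gen_ind a b)%N.
Proof.
rewrite size_filter -sum1_count big_mkcond big_allpairs; apply: eq_bigr => a _.
by apply: eq_bigr => b _; rewrite /gen_ind; case: ifP.
Qed.

Lemma sum_eq1 p : (\sum_(1 <= j < p.+1) (j == 1))%N = (0 < p)%N.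
Proof.
case: p => [|p]; first by rewrite big_geq.
rewrite big_ltn // eqxx big_nat_cond big1 // => j /andP[/andP[hj _] _].
by case: j hj => [|[]].
Qed.

Lemma row_zero p : (\sum_(b <- zrange p) gen_ind 0 b)%N = (0 < p)%N.
Proof.
rewrite big_zrange -sum_eq1 /gen_ind gcd0z /=; congr (_ + _)%N.
by apply: eq_big_nat => j /andP[j1 _]; rewrite !gcd0z /lexpos /=; lia.
Qed.

Lemma row_pos p i : (0 < i)%N ->
  (\sum_(b <- zrange p) gen_ind i%:Z b)%N = ((i == 1) + 2 * \sum_(1 <= j < p.+1) coprime i j)%N.
Proof.
move=> i0; rewrite big_zrange mul2n -addnn -big_split /= /gen_ind gcdz0 /lexpos /=.
congr (_ + _)%N; first by lia.
by apply: eq_bigr => j _; rewrite gcdzN /coprime; lia.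
Qed.

Lemma row_neg p i : (0 < i)%N -> (\sum_(b <- zrange p) gen_ind (- i%:Z) b)%N = 0%N.
Proof. by move=> i0; rewrite big1 // => b _; rewrite /gen_ind /lexpos /=; lia. Qed.

Lemma size_gens p : size (gens p) = (4 * \sum_(1 <= j < p.+1) totient j)%N.
Proof.
rewrite size_gens_sum big_zrange row_zero.
rewrite (eq_big_nat _ _ (F2 := fun i => (i == 1) + 2 * \sum_(1 <= j < p.+1) coprime i j)%N).
  by rewrite big_split /= -big_distrr /= sum_eq1; have := sum_coprime_pairs p; lia.
by move=> i /andP[i0 _]; rewrite row_pos // row_neg // addn0.
Qed.

End Counting.

Theorem proposition4p3 (R : realFieldType) (p : nat) (hp : (0 < p)%N) :
  exists s : seq (R * R),
    [/\ uniq s,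
        (forall x : R * R, x \in s <-> is_vertex p x) &
        size s = (8 * \sum_(1 <= j < p.+1) totient j)%N].
Proof.
exists (map (half_plane_vertex R (gens p)) (prims p)); split.
- by rewrite (map_inj_in_uniq (@half_plane_vertex_inj R p)) uniq_prims.
- move=> x; rewrite is_vertexE; split=> [/mapP[c hc ->]|hx].
    exact: half_plane_vertex_extreme.
  have [c hc ->] := extreme_eq_half_plane_vertex (@gens_neq0 p) (@gens_nonparallel p)
    (size_gens_gt0 hp) hx.
  by apply: map_f; rewrite mem_prims -box_prim_rot -mem_prims.
- by rewrite size_map size_cat size_map size_gens; lia.
Qed.
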